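(* Let $\varepsilon>0$, let $\mathcal S=\{S_1,\dots,S_K,S_\infty\}$ be a family of pairwise disjoint subsets of $\{2,\dots,n\}$ and $\rho\in\{1,\dots,\lceil1/\varepsilon\rceil\}^K$. Every extreme point $x^*$ of $P(\mathcal S,\rho)$ has at most two fractional components; moreover, if it has exactly two fractional components, then both lie in the same set $S_h$ for some $h\in[K]$ (not in $S_\infty$).
   Context: Minimum Knapsack data: $n$ items with costs $c\in\mathbb{R}^n_{\ge0}$, weights $w\in\mathbb{R}^n_{\ge0}$ and target $b$. For $\mathcal S$ and $\rho$ as in the claim, $P(\mathcal S,\rho)$ is the set of $x\in\mathbb{R}^n$ satisfying: $x_1=1$; $w^Tx\ge b$; $\sum_{i\in S_k}x_i=\rho_k$ for all $k\in[K]$ with $\rho_k<\lceil1/\varepsilon\rceil$; $\sum_{i\in S_k}x_i\ge\rho_k$ for all $k\in[K]$ with $\rho_k=\lceil1/\varepsilon\rceil$; $x_i=0$ for all $i\in\{2,\dots,n\}\setminus\bigcup_{k\in[K]\cup\{\infty\}}S_k$; and $0\le x_i\le1$ for all $i\in\bigcup_{k\in[K]\cup\{\infty\}}S_k$. *)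

From HB Require Import structures.
From mathcomp Require Import all_boot all_order all_algebra.
Set Implicit Arguments. Unset Strict Implicit. Unset Printing Implicit Defensive.
Import Order.TTheory GRing.Theory Num.Theory.
Local Open Scope ring_scope.

(* Items are indexed by 'I_n.+1; item "1" of the paper is ord0,
   item j (j = 2..n+1) is the ordinal j-1. *)

Definition Lceil (R : archiRealFieldType) (eps : R) : int := Num.ceil (eps^-1).

Definition inP (R : archiRealFieldType) (n K : nat) (eps : R)
    (w : 'I_n.+1 -> R) (b : R)
    (S : 'I_K -> {set 'I_n.+1}) (Sinf : {set 'I_n.+1}) (rho : 'I_K -> int)
    (x : 'I_n.+1 -> R) : Prop :=
  [/\ x ord0 = 1 /\ \sum_(i < n.+1) w i * x i >= b,
      (forall k, rho k < Lceil eps -> \sum_(i in S k) x i = (rho k)%:~R),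
      (forall k, rho k = Lceil eps -> \sum_(i in S k) x i >= (rho k)%:~R),
      (forall i, i != ord0 -> (forall k, i \notin S k) -> i \notin Sinf -> x i = 0)
    & (forall i, ((exists k, i \in S k) \/ i \in Sinf) -> 0 <= x i <= 1)].

Definition extreme_point (R : archiRealFieldType) (n : nat)
    (P : ('I_n.+1 -> R) -> Prop) (x : 'I_n.+1 -> R) : Prop :=
  P x /\
  forall (y z : 'I_n.+1 -> R) (t : R), P y -> P z -> 0 < t -> t < 1 ->
    (forall i, x i = t * y i + (1 - t) * z i) -> (forall i, y i = z i).

Definition frac_set (R : archiRealFieldType) (n : nat) (x : 'I_n.+1 -> R)
  : {set 'I_n.+1} := [set i | x i \isn't a Num.int].

(* Call a direction d admissible at x if it is supported on the fractional
   coordinates and has zero sum on every block whose x-sum is integral.  The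
   equality constraints only concern such blocks, and every other block
   constraint and every fractional coordinate has slack, so x +- delta d stays
   feasible as soon as w . d = 0.  At an extreme point this forces d = 0,
   hence the admissible directions span a space of dimension at most one.
   Every fractional coordinate i carries one: e_i when no block through i has
   integral sum, and e_i - e_j for a second fractional coordinate j of such a
   block otherwise.  So the admissible direction at a fractional coordinate a
   is nonzero at every other fractional coordinate, which must therefore be
   the j of a block containing a. *)
From HB Require Import structures.
From mathcomp Require Import all_boot all_order all_algebra.
From mathcomp Require Import ring lra.
Import Order.TTheory GRing.Theory Num.Theory.
Local Open Scope ring_scope.

Lemma exists_pos_lower_bound (R : realDomainType) (I : finType) (P : pred I)
    (f : I -> R) :
  (forall i, P i -> 0 < f i) -> exists2 e, 0 < e & forall i, P i -> e <= f i.
Proof.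
move=> f_gt0.
suff [e e_gt0 He] : exists2 e, 0 < e & forall i, i \in enum I -> P i -> e <= f i.
  by exists e => // i; apply: He; rewrite mem_enum.
elim: (enum I) => [|a s [e e_gt0 He]]; first by exists 1.
case: (boolP (P a)) => Pa; last first.
  exists e => // i; rewrite inE => /predU1P[-> Pa'|]; last exact: He.
  by rewrite Pa' in Pa.
exists (Num.min e (f a)); first by rewrite lt_min e_gt0 f_gt0.
move=> i; rewrite inE => /predU1P[-> _|si Pi]; rewrite ge_min ?lexx ?orbT //.
by rewrite He.
Qed.

Lemma sum_natr_eq (R : nzRingType) (I : finType) (A : {pred I}) (i : I) :
  \sum_(m in A) ((m == i)%:R : R) = (i \in A)%:R.
Proof.
case: (boolP (i \in A)) => iA.
  rewrite (bigD1 i) //= eqxx big1 ?addr0 // => m /andP[_ /negbTE ->].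
  by rewrite mulr0n.
by rewrite big1 ?mulr0n // => m mA; case: eqP => [mi|]; [rewrite -mi mA in iA|].
Qed.

Lemma int01_between (R : archiRealFieldType) (a : R) :
  0 <= a <= 1 -> a \isn't a Num.int -> 0 < a < 1.
Proof.
case/andP => a_ge0 a_le1 a_frac.
have a_neq0 : a != 0 by apply: contraNneq a_frac => ->; rewrite rpred0.
have a_neq1 : a != 1 by apply: contraNneq a_frac => ->; rewrite rpred1.
by rewrite !lt_neqAle a_ge0 a_le1 eq_sym a_neq0 a_neq1.
Qed.

Section ExtremePoint.

Set Implicit Arguments.
Unset Strict Implicit.

Variables (R : archiRealFieldType) (n K : nat) (w : 'I_n.+1 -> R) (b eps : R).
Variables (S : 'I_K -> {set 'I_n.+1}) (Sinf : {set 'I_n.+1}) (rho : 'I_K -> int).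
Variable x : 'I_n.+1 -> R.

Local Notation P := (inP eps w b S Sinf rho).
Local Notation F := (frac_set x).

Lemma in_frac_set i : (i \in F) = (x i \isn't a Num.int).
Proof. by rewrite inE. Qed.

Definition admissible_dir (d : 'I_n.+1 -> R) : Prop :=
  (forall i, i \notin F -> d i = 0) /\
  (forall k, \sum_(i in S k) x i \is a Num.int -> \sum_(i in S k) d i = 0).

Definition unit_dir (i : 'I_n.+1) (l : 'I_n.+1) : R := (l == i)%:R.

Lemma admissible_dir_lincomb (u v : 'I_n.+1 -> R) (a c : R) :
  admissible_dir u -> admissible_dir v ->
  admissible_dir (fun i => a * u i - c * v i).
Proof.
move=> [uF uS] [vF vS]; split=> [i iF|k k_int].
  by rewrite uF ?vF // !mulr0 subrr.
by rewrite sumrB -!mulr_sumr uS ?vS // !mulr0 subrr.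
Qed.

Lemma admissible_unit_dir i :
  i \in F -> (forall k, i \in S k -> \sum_(l in S k) x l \isn't a Num.int) ->
  admissible_dir (unit_dir i).
Proof.
move=> iF i_slack; split=> [l lF|k k_int].
  have [li | li] := eqVneq l i; first by rewrite li iF in lF.
  by rewrite /unit_dir (negbTE li).
rewrite sum_natr_eq; case: (boolP (i \in S k)) => // ik.
by move: (i_slack k ik); rewrite k_int.
Qed.

Hypothesis S_disj : forall k l, k != l -> [disjoint S k & S l].

Lemma admissible_unit_dirB i j k :
  i \in F -> j \in F -> i \in S k -> j \in S k ->
  admissible_dir (fun l => unit_dir i l - unit_dir j l).
Proof.
move=> iF jF ik jk; split=> [l lF|k' _].
  have [li | li] := eqVneq l i; first by rewrite li iF in lF.
  have [lj | lj] := eqVneq l j; first by rewrite lj jF in lF.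
  by rewrite /unit_dir (negbTE li) (negbTE lj) subrr.
rewrite sumrB !sum_natr_eq; case: (eqVneq k k') => [<-|kk'].
  by rewrite ik jk subrr.
by rewrite (disjointFr (S_disj kk') ik) (disjointFr (S_disj kk') jk) subrr.
Qed.

Lemma frac_partner i k :
  i \in F -> i \in S k -> \sum_(l in S k) x l \is a Num.int ->
  exists j, [/\ j \in F, j != i & j \in S k].
Proof.
move=> iF ik k_int.
have [/existsP[j /and3P[? ? ?]] | /existsPn no_partner] :=
  boolP [exists j, [&& j \in F, j != i & j \in S k]]; first by exists j.
move: iF; rewrite in_frac_set => /negP[].
have rest_int : \sum_(l in S k | l != i) x l \is a Num.int.
  apply: rpred_sum => l /andP[lk li].
  by move: (no_partner l); rewrite lk li !andbT in_frac_set negbK.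
rewrite (bigD1 i) //= in k_int.
by rewrite -(addrK (\sum_(l in S k | l != i) x l) (x i)) rpredB.
Qed.

Lemma frac_dir i :
  i \in F ->
  admissible_dir (unit_dir i) \/
  exists j, [/\ j \in F, j != i,
              admissible_dir (fun l => unit_dir i l - unit_dir j l)
            & exists k, i \in S k /\ j \in S k].
Proof.
move=> iF.
case: (boolP [exists k, (i \in S k) && (\sum_(l in S k) x l \is a Num.int)]).
  case/existsP=> k /andP[ik k_int]; right.
  have [j [jF ji jk]] := frac_partner iF ik k_int.
  by exists j; split=> //; [exact: admissible_unit_dirB ik jk | exists k].
move/existsPn=> i_slack; left; apply: admissible_unit_dir => // k ik.
by move: (i_slack k); rewrite ik.
Qed.

Hypothesis xP : P x.

Lemma frac_in_01 i : i \in F -> 0 < x i < 1.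
Proof.
case: xP => [[x0 _] _ _ out box] iF.
apply: int01_between; last by rewrite -in_frac_set.
apply: box; case: (boolP [exists k, i \in S k]) => [/existsP[k ik]|/existsPn iS].
  by left; exists k.
right; apply: contraTT iF => iSinf; rewrite in_frac_set negbK.
have [->|i0] := eqVneq i ord0; first by rewrite x0 rpred1.
by rewrite out // rpred0.
Qed.

Lemma ord0_notin_frac : ord0 \notin F.
Proof. by case: xP => [[x0 _] _ _ _ _]; rewrite in_frac_set x0 rpred1. Qed.

Lemma exists_slack :
  exists2 e, 0 < e &
    (forall i, i \in F -> e <= x i <= 1 - e) /\
    (forall k, (rho k)%:~R < \sum_(i in S k) x i ->
       (rho k)%:~R + e <= \sum_(i in S k) x i).
Proof.
have [e1 e1_gt0 He1] := @exists_pos_lower_bound R _ (mem F)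
  (fun i => Num.min (x i) (1 - x i))
  (fun i iF => ltac:(have /andP[? ?] := frac_in_01 iF; rewrite lt_min subr_gt0;
                     exact/andP)).
have [e2 e2_gt0 He2] := @exists_pos_lower_bound R _
  (fun k => (rho k)%:~R < \sum_(i in S k) x i)
  (fun k => \sum_(i in S k) x i - (rho k)%:~R) (fun k => ltac:(by rewrite subr_gt0)).
exists (Num.min e1 e2); first by rewrite lt_min e1_gt0 e2_gt0.
have e_le1 : Num.min e1 e2 <= e1 by rewrite ge_min lexx.
have e_le2 : Num.min e1 e2 <= e2 by rewrite ge_min lexx orbT.
split=> [i /He1|k /He2]; last by lra.
by rewrite le_min => /andP[? ?]; apply/andP; split; lra.
Qed.

Lemma norm_sum_in_le (A : {pred 'I_n.+1}) (d : 'I_n.+1 -> R) :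
  `|\sum_(i in A) d i| <= \sum_i `|d i|.
Proof.
apply: le_trans (ler_norm_sum _ _ _) _.
by rewrite [leRHS](bigID (mem A)) /= lerDl sumr_ge0.
Qed.

Lemma admissible_dir_perturb d :
  admissible_dir d -> \sum_i w i * d i = 0 ->
  exists2 delta, 0 < delta & forall s, `|s| <= delta -> P (fun i => x i + s * d i).
Proof.
move=> [dF dS] wd0; have [e e_gt0 [e_box e_sum]] := exists_slack.
set D := \sum_i `|d i|.
have D1_gt0 : 0 < D + 1 by rewrite ltr_wpDl ?sumr_ge0.
exists (e / (D + 1)); first by rewrite divr_gt0.
move=> s s_le.
have small (A : {pred 'I_n.+1}) : `|s * \sum_(i in A) d i| <= e.
  rewrite normrM; have := norm_sum_in_le A d; rewrite -/D => dA.
  rewrite ler_pdivlMr // in s_le.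
  have := normr_ge0 s; have := normr_ge0 (\sum_(i in A) d i); nra.
have small1 i : `|s * d i| <= e by have := small (pred1 i); rewrite big_pred1_eq.
have sum_split (A : {pred 'I_n.+1}) (g : 'I_n.+1 -> R) :
    \sum_(i in A) g i * (x i + s * d i) =
    \sum_(i in A) g i * x i + s * \sum_(i in A) g i * d i.
  by rewrite mulr_sumr -big_split; apply: eq_bigr => i _ /=; rewrite mulrDr mulrCA.
have sum_split1 (A : {pred 'I_n.+1}) :
    \sum_(i in A) (x i + s * d i) = \sum_(i in A) x i + s * \sum_(i in A) d i.
  by rewrite mulr_sumr -big_split.
case: xP => [[x0 xw] Seq Sge out box]; split.
- by rewrite dF ?ord0_notin_frac // mulr0 addr0 sum_split wd0 mulr0 addr0.
- move=> k rho_lt; have Sk_eq := Seq k rho_lt.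
  by rewrite sum_split1 dS ?Sk_eq ?intr_int // mulr0 addr0.
- move=> k rho_eq; have Sk_ge := Sge k rho_eq; rewrite sum_split1.
  case: (boolP (\sum_(i in S k) x i \is a Num.int)) => Sk_int.
    by rewrite dS // mulr0 addr0.
  have rho_lt : (rho k)%:~R < \sum_(i in S k) x i.
    by rewrite lt_neqAle Sk_ge andbT; apply: contraNneq Sk_int => <-; rewrite intr_int.
  have := e_sum k rho_lt; have := small (mem (S k)).
  have := ler_norm (- (s * \sum_(i in S k) d i)); rewrite normrN; lra.
- move=> i i0 iS iSinf; have xi0 := out i i0 iS iSinf.
  by rewrite dF ?in_frac_set ?xi0 ?rpred0 // mulr0 addr0.
- move=> i i_in; case: (boolP (i \in F)) => iF; last by rewrite dF // mulr0 addr0 box.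
  have := e_box i iF; have := small1 i.
  have := ler_norm (s * d i); have := ler_norm (- (s * d i)); rewrite normrN.
  move=> ? ? ? /andP[? ?]; apply/andP; split; lra.
Qed.

Hypothesis x_extreme : extreme_point P x.

Lemma extreme_admissible_dir_eq0 d :
  admissible_dir d -> \sum_i w i * d i = 0 -> forall i, d i = 0.
Proof.
move=> d_adm wd0 i; have [delta delta_gt0 Pd] := admissible_dir_perturb d_adm wd0.
have delta_le : `|delta| <= delta by rewrite ger0_norm // ltW.
have Pdp := Pd _ delta_le; have Pdm := Pd (- delta); rewrite normrN in Pdm.
have half_gt0 : 0 < 2^-1 :> R by rewrite invr_gt0 ltr0n.
have half_lt1 : 2^-1 < 1 :> R by rewrite invf_lt1 ?ltr0n ?ltr1n.
have := x_extreme.2 _ _ _ Pdp (Pdm delta_le) half_gt0 half_lt1.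
move=> /(_ (fun j => ltac:(field))) /(_ i) same.
have /eqP : delta * d i = 0 by lra.
by rewrite mulf_eq0 gt_eqF // => /eqP.
Qed.

Lemma admissible_dir_vanish u v p :
  admissible_dir u -> admissible_dir v -> u p != 0 -> v p = 0 -> forall q, v q = 0.
Proof.
move=> u_adm v_adm up vp.
set a := \sum_i w i * v i; set c := \sum_i w i * u i.
have [a0|a_neq0] := eqVneq a 0; first exact: extreme_admissible_dir_eq0.
have wd0 : \sum_i w i * (a * u i - c * v i) = 0.
  rewrite (eq_bigr (fun i => a * (w i * u i) - c * (w i * v i))) => [|i _]; last by ring.
  by rewrite sumrB -!mulr_sumr mulrC subrr.
have := extreme_admissible_dir_eq0 (admissible_dir_lincomb a c u_adm v_adm) wd0 p.
by rewrite vp mulr0 subr0 => /eqP; rewrite mulf_eq0 (negbTE a_neq0) (negbTE up).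
Qed.

Lemma admissible_dir_neq0 v a c :
  admissible_dir v -> v a != 0 -> c \in F -> v c != 0.
Proof.
move=> v_adm va cF; apply: contra_neq va => vc.
have [u [u_adm uc]] : exists u, admissible_dir u /\ u c != 0.
  case: (frac_dir cF) => [c_adm | [j [_ jc cj_adm _]]].
    by exists (unit_dir c); rewrite /unit_dir eqxx oner_eq0.
  exists (fun l => unit_dir c l - unit_dir j l); split=> //.
  by rewrite /unit_dir eqxx [c == j]eq_sym (negbTE jc) subr0 oner_eq0.
exact: admissible_dir_vanish u_adm v_adm uc vc a.
Qed.

Lemma frac_companion a :
  a \in F -> exists j, forall c, c \in F -> c != a ->
    c = j /\ exists k, a \in S k /\ c \in S k.
Proof.
move=> aF; case: (frac_dir aF) => [a_adm | [j [jF ja aj_adm [k [ak jk]]]]].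
  exists a => c cF ca.
  have aa : unit_dir a a != 0 by rewrite /unit_dir eqxx oner_eq0.
  by have := admissible_dir_neq0 a_adm aa cF; rewrite /unit_dir (negbTE ca) eqxx.
exists j => c cF ca.
have aa : unit_dir a a - unit_dir j a != 0.
  by rewrite /unit_dir eqxx [a == j]eq_sym (negbTE ja) subr0 oner_eq0.
have := admissible_dir_neq0 aj_adm aa cF.
rewrite /unit_dir (negbTE ca) sub0r oppr_eq0 pnatr_eq0 eqb0 negbK => /eqP ->.
by split=> //; exists k.
Qed.

End ExtremePoint.

Theorem lemma2 (R : archiRealFieldType) (n K : nat)
    (c w : 'I_n.+1 -> R) (b eps : R)
    (S : 'I_K -> {set 'I_n.+1}) (Sinf : {set 'I_n.+1}) (rho : 'I_K -> int)
    (x : 'I_n.+1 -> R) :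
  0 < eps ->
  (forall i, 0 <= c i) -> (forall i, 0 <= w i) ->
  (forall k, ord0 \notin S k) -> ord0 \notin Sinf ->
  (forall k l, k != l -> [disjoint S k & S l]) ->
  (forall k, [disjoint S k & Sinf]) ->
  (forall k, 1 <= rho k <= Lceil eps) ->
  extreme_point (inP eps w b S Sinf rho) x ->
  (#|frac_set x| <= 2)%N /\
  (#|frac_set x| = 2%N -> exists h : 'I_K, frac_set x \subset S h).
Proof.
move=> _ _ _ _ _ S_disj _ _ x_extreme.
have [-> | [a aF]] := set_0Vmem (frac_set x); first by rewrite cards0.
have [j Hj] := frac_companion S_disj x_extreme.1 x_extreme aF.
have F_sub : frac_set x \subset [set a; j].
  apply/subsetP => l lF; rewrite !inE.
  by have [// | la] := eqVneq l a; rewrite (Hj l lF la).1 eqxx.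
split; first by rewrite (leq_trans (subset_leq_card F_sub)) // cards2; case: (_ != _).
move=> /eqP F2; have [i iF ia] : exists2 i, i \in frac_set x & i != a.
  apply/exists_inP; apply: contraTT F2 => /exists_inPn F_a.
  suff /subset_leq_card : frac_set x \subset [set a].
    by rewrite cards1 => le1; apply/eqP => F2'; rewrite F2' in le1.
  by apply/subsetP => l lF; rewrite inE; apply/negPn/F_a.
have [ij [k [ak ik]]] := Hj i iF ia.
exists k; apply/subsetP => l /(subsetP F_sub); rewrite -ij !inE.
by case/orP => /eqP ->.
Qed.
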